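(* Let $n\ge 3$. Every instance of the $n^2$-puzzle is solvable: for the $n\times n$ grid graph $G=(V,E)$ with a set $R$ of $n^2$ robots and any bijections $x_I,x_G:R\to V$, there exists a collision-free set of feasible paths taking each robot $r$ from $x_I(r)$ to $x_G(r)$.
   Context: Let $\mathbb Z^+=\mathbb N\cup\{0\}$. A path for robot $r_i$ is a map $p_i:\mathbb Z^+\to V$; it is feasible if $p_i(0)=x_I(r_i)$, there is a smallest $k_i^{\min}$ with $p_i(k)=x_G(r_i)$ for all $k\ge k_i^{\min}$, and for $0\le k<k_i^{\min}$ either $(p_i(k),p_i(k+1))\in E$ or $p_i(k)=p_i(k+1)$. Two paths $p_i,p_j$ ($i\ne j$) collide if for some $k$, $p_i(k)=p_j(k)$ or $(p_i(k),p_i(k+1))=(p_j(k+1),p_j(k))$. Multiple robots may move in the same time step. *)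

From mathcomp Require Import all_boot.
Set Implicit Arguments. Unset Strict Implicit. Unset Printing Implicit Defensive.

Definition cell (n : nat) : finType := ('I_n * 'I_n)%type.

Definition grid_edge (n : nat) (u v : cell n) : bool :=
  ((u.1 : nat) == v.1) && (((u.2 : nat) == (v.2).+1) || ((v.2 : nat) == (u.2).+1))
  || ((u.2 : nat) == v.2) && (((u.1 : nat) == (v.1).+1) || ((v.1 : nat) == (u.1).+1)).

(* A path is a map from time steps (nat = Z^+) to vertices. *)
Definition path_of (V : Type) := nat -> V.

(* Feasibility of a path p from xI to xG w.r.t. edge relation E:
   p 0 = xI, there is a time kmin after which p stays at xG, and before
   kmin every step traverses an edge or waits. (Existence of some such kmin
   is equivalent to existence of a smallest one.) *)
Definition feasible (V : Type) (E : V -> V -> bool) (xI xG : V) (p : nat -> V) :=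
  p 0 = xI /\
  exists kmin : nat,
    (forall k, kmin <= k -> p k = xG) /\
    (forall k, k < kmin -> E (p k) (p k.+1) \/ p k = p k.+1).

Definition collide (V : Type) (pi pj : nat -> V) :=
  exists k : nat, pi k = pj k \/ (pi k, pi k.+1) = (pj k.+1, pj k).

From mathcomp Require Import all_boot all_fingroup zify.
Set Implicit Arguments. Unset Strict Implicit. Unset Printing Implicit Defensive.
Local Open Scope group_scope.

(* Call a permutation of the vertices a legal move if every vertex stays put or
   crosses an edge and no two vertices trade places.  Applying legal moves one
   after the other to the initial configuration yields collision-free paths, so
   it suffices to show that legal moves generate the whole symmetric group.
   Rotating the four robots of a 2x2 square is legal.  On the 3x3 grid the
   word B^-1 C^-1 B A C in the square rotations A, B, C, D is a transposition
   of two neighbours; conjugating by the rotations and composing, every cell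
   gets transposed with the centre, and such a star of transpositions generates
   the symmetric group.  Embedding a 3x3 block into an n x n grid, n >= 3,
   maps legal moves to legal moves, and any two cells at distance at most two
   in each coordinate lie in a common block; chaining such pairs transposes
   every cell with a corner. *)

Lemma tpermE (T : finType) (x y z : T) :
  tperm x y z = if z == x then y else if z == y then x else z.
Proof. by rewrite permE. Qed.

Section TpermGroup.
Variables (T : finType) (H : {group {perm T}}).

Lemma tperm_trans_in (x y z : T) :
  tperm x y \in H -> tperm y z \in H -> tperm x z \in H.
Proof.
move=> Hxy Hyz.
have [<-|xz] := eqVneq x z; first by rewrite tperm1 group1.
have [->//|xy] := eqVneq x y; have [<-//|yz] := eqVneq y z.
by rewrite -(tpermJ_tperm yz xz) groupJ // tpermC.
Qed.

Lemma tperm_conj_in (s : {perm T}) (x y x' y' : T) :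
  s \in H -> s x = x' -> s y = y' -> tperm x y \in H -> tperm x' y' \in H.
Proof. by move=> Hs <- <- Hxy; rewrite -tpermJ groupJ. Qed.

Lemma perm_in_of_tperm_star (x : T) (s : {perm T}) :
  (forall y, tperm x y \in H) -> s \in H.
Proof.
move=> Hx; suff /subsetP-> : [set: {perm T}] \subset H by [].
by rewrite -(gen_tperm x) gen_subG; apply/subsetP => _ /imsetP[y _ ->].
Qed.

End TpermGroup.

Section LegalMoves.
Variables (V : finType) (E : rel V).

Definition legal_move (s : {perm V}) : bool :=
  [forall x, (s x == x) || E x (s x)] && [forall x, (s (s x) == x) ==> (s x == x)].

Definition legal_moves : {set {perm V}} := [set s | legal_move s].

Lemma legal_movesP (s : {perm V}) :
  reflect ((forall x, s x = x \/ E x (s x)) /\ (forall x, s (s x) = x -> s x = x))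
          (s \in legal_moves).
Proof.
rewrite inE; apply: (iffP andP) => [[/forallP Hstep /forallP Hswap]|[Hstep Hswap]].
  split=> x; first by have /orP[/eqP|] := Hstep x; [left|right].
  by move=> /eqP ssx; apply/eqP; move/implyP: (Hswap x); apply.
split; apply/forallP => x; first by have [->|->] := Hstep x; rewrite ?eqxx ?orbT.
by apply/implyP => /eqP/Hswap->.
Qed.

Lemma legal_move1 : 1 \in legal_moves.
Proof. by apply/legal_movesP; split=> x; rewrite !perm1; [left|]. Qed.

Definition rot (a b c d : V) : {perm V} := tperm a b * tperm a c * tperm a d.

Lemma rot_legal (a b c d : V) : uniq [:: a; b; c; d] ->
  E a b -> E b c -> E c d -> E d a -> rot a b c d \in legal_moves.
Proof.
rewrite /= !in_cons !in_nil !orbF !negb_or !andbT => /and3P[/and3P[ab ac ad] /andP[bc bd] cd].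
move=> Eab Ebc Ecd Eda.
have [ba ca da] : [/\ b != a, c != a & d != a] by split; rewrite eq_sym.
have [cb db dc] : [/\ c != b, d != b & d != c] by split; rewrite eq_sym.
have rot_a : rot a b c d a = b by rewrite !permM tpermL (tpermD ab cb) (tpermD ab db).
have rot_b : rot a b c d b = c by rewrite !permM tpermR tpermL (tpermD ac dc).
have rot_c : rot a b c d c = d by rewrite !permM (tpermD ac bc) tpermR tpermL.
have rot_d : rot a b c d d = a by rewrite !permM (tpermD ad bd) (tpermD ad cd) tpermR.
have rot_out y : y \notin [:: a; b; c; d] -> rot a b c d y = y.
  rewrite !in_cons !in_nil !orbF !negb_or ![y == _]eq_sym => /and4P[? ? ? ?].
  by rewrite !permM !tpermD.
apply/legal_movesP; split=> x; have [|x_out] := boolP (x \in [:: a; b; c; d]).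
2,4: by rewrite !rot_out //; left.
all: rewrite !in_cons !in_nil !orbF => /or4P[] /eqP->; rewrite ?(rot_a, rot_b, rot_c, rot_d).
all: by [right | move/eqP; rewrite ?(negPf ca, negPf db, negPf ac, negPf bd)].
Qed.

Section Schedule.
Variable moves : seq {perm V}.
Hypothesis moves_legal : {subset moves <= legal_moves}.

Let move_at t := nth 1 moves t.
Definition run t : {perm V} := \prod_(i < t) move_at i.

Lemma move_at_legal t : move_at t \in legal_moves.
Proof.
rewrite /move_at; case: (ltnP t (size moves)) => [/(mem_nth 1)/moves_legal //|ht].
by rewrite nth_default ?legal_move1.
Qed.

Lemma runS t : run t.+1 = run t * move_at t.
Proof. by rewrite /run big_ord_recr. Qed.

Lemma run_final t : size moves <= t -> run t = \prod_(s <- moves) s.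
Proof.
move=> ht; rewrite -(subnKC ht); elim: (t - _) => [|d IHd].
  by rewrite addn0 (big_nth 1) big_mkord.
by rewrite addnS runS IHd /move_at nth_default ?mulg1 ?leq_addr.
Qed.

Lemma run_step x t : E (run t x) (run t.+1 x) \/ run t x = run t.+1 x.
Proof.
rewrite runS permM; have /legal_movesP[Hstep _] := move_at_legal t.
by have [->|] := Hstep (run t x); [right|left].
Qed.

Lemma run_feasible x :
  feasible E x ((\prod_(s <- moves) s) x) (fun t => run t x).
Proof.
split; first by rewrite /run big_ord0 perm1.
exists (size moves); split=> [t /run_final->//|t _]; exact: run_step.
Qed.

Lemma run_collision_free x y :
  x != y -> ~ collide (fun t => run t x) (fun t => run t y).
Proof.
move=> /eqP xy [t [/perm_inj //|[]]]; rewrite !runS !permM.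
have /legal_movesP[_ Hswap] := move_at_legal t.
set u := run t x; set v := run t y => uv vu.
have : move_at t (move_at t u) = u by rewrite vu -uv.
by move/Hswap; rewrite vu => /perm_inj yx; apply: xy.
Qed.

End Schedule.

Lemma legal_schedule (R : finType) (xI : R -> V) (pi : {perm V}) :
  injective xI -> pi \in <<legal_moves>> ->
  exists p : R -> nat -> V,
    (forall r, feasible E (xI r) (pi (xI r)) (p r)) /\
    (forall ri rj, ri <> rj -> ~ collide (p ri) (p rj)).
Proof.
move=> injI /gen_prodgP[k [c c_legal ->]].
pose moves := [seq c i | i <- enum 'I_k].
have moves_legal : {subset moves <= legal_moves} by move=> _ /mapP[i _ ->].
have -> : \prod_i c i = \prod_(s <- moves) s by rewrite big_map enumT.
exists (fun r t => run moves t (xI r)); split=> [r|ri rj rij]; first exact: run_feasible.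
by apply: run_collision_free => //; apply/eqP => /injI.
Qed.

End LegalMoves.

Section PermExtension.
Variables (T V : finType) (f : T -> V).
Hypothesis f_inj : injective f.

Definition ext_fun (s : {perm T}) (x : V) : V :=
  if [pick t | f t == x] is Some t then f (s t) else x.

Lemma ext_funE s t : ext_fun s (f t) = f (s t).
Proof. by rewrite /ext_fun; case: pickP => [t' /eqP/f_inj-> | /(_ t)]; rewrite ?eqxx. Qed.

Lemma ext_fun_out s x : x \notin codom f -> ext_fun s x = x.
Proof.
rewrite /ext_fun => x_out; case: pickP => // t /eqP ftx.
by rewrite -ftx codom_f in x_out.
Qed.

Lemma ext_funK s : cancel (ext_fun s) (ext_fun s^-1).
Proof.
move=> x; have [/codomP[t ->]|x_out] := boolP (x \in codom f).
  by rewrite !ext_funE permK.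
by rewrite !ext_fun_out.
Qed.

Definition perm_ext s : {perm V} := perm (can_inj (ext_funK s)).

Lemma perm_extE s t : perm_ext s (f t) = f (s t).
Proof. by rewrite permE ext_funE. Qed.

Lemma perm_ext_out s x : x \notin codom f -> perm_ext s x = x.
Proof. by move=> x_out; rewrite permE ext_fun_out. Qed.

Lemma perm_ext_eq (s1 s2 : {perm V}) : (forall t, s1 (f t) = s2 (f t)) ->
  (forall x, x \notin codom f -> s1 x = s2 x) -> s1 = s2.
Proof.
move=> on_image off_image; apply/permP => x.
by have [/codomP[t ->]|/off_image] := boolP (x \in codom f).
Qed.

Lemma perm_ext1 : perm_ext 1 = 1.
Proof. by apply: perm_ext_eq => [t|x x_out]; rewrite ?perm_extE ?perm_ext_out ?perm1. Qed.

Lemma perm_extM s1 s2 : perm_ext (s1 * s2) = perm_ext s1 * perm_ext s2.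
Proof.
by apply: perm_ext_eq => [t|x x_out]; rewrite permM ?perm_extE ?permM // !perm_ext_out.
Qed.

Lemma perm_ext_tperm a b : perm_ext (tperm a b) = tperm (f a) (f b).
Proof.
apply: perm_ext_eq => [t|x x_out]; first by rewrite perm_extE inj_tperm.
by rewrite perm_ext_out // tpermD //; apply: contraNneq x_out => <-; rewrite codom_f.
Qed.

Variables (ET : rel T) (EV : rel V).
Hypothesis f_edge : {homo f : x y / ET x y >-> EV x y}.

Lemma perm_ext_legal s : s \in legal_moves ET -> perm_ext s \in legal_moves EV.
Proof.
move=> /legal_movesP[Hstep Hswap]; apply/legal_movesP.
split=> x; have [/codomP[t ->]|x_out] := boolP (x \in codom f);
  rewrite ?perm_extE ?(perm_ext_out _ x_out) //; try by left.
- by have [->|/f_edge] := Hstep t; [left|right].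
- by move=> /f_inj/Hswap ->.
Qed.

Lemma perm_ext_gen s : s \in <<legal_moves ET>> -> perm_ext s \in <<legal_moves EV>>.
Proof.
case/gen_prodgP => k [c c_legal ->]; rewrite (big_morph perm_ext perm_extM perm_ext1).
by apply: group_prod => i _; apply/mem_gen/perm_ext_legal.
Qed.

End PermExtension.

Section Grid3.

Local Notation "[ 'cell' i , j ]" := ((@Ordinal 3 i isT, @Ordinal 3 j isT) : cell 3)
  (format "[ 'cell'  i ,  j ]").
Local Notation square i j :=
  (rot [cell i, j] [cell i, j.+1] [cell i.+1, j.+1] [cell i.+1, j]).
Local Notation G3 := <<legal_moves (@grid_edge 3)>>.

(* Rewriting [tpermE] innermost first keeps the nested conditionals from blowing up. *)
Local Ltac eval_cells := rewrite /rot !permM; do ![rewrite [tperm _ _ (_, _)]tpermE /=].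

Lemma grid3_swap_word : tperm [cell 0, 0] [cell 0, 1] =
  (square 0 1)^-1 * (square 1 0)^-1 * square 0 1 * square 0 0 * square 1 0.
Proof.
apply/permP => -[[[|[|[|//]]] ?] [[|[|[|//]]] ?]]; apply/eqP;
  by rewrite !invMg !tpermV; eval_cells.
Qed.

Lemma grid3_legal_gen (s : {perm cell 3}) : s \in G3.
Proof.
have [A B C D] : [/\ square 0 0 \in G3, square 0 1 \in G3, square 1 0 \in G3
                   & square 1 1 \in G3] by split; apply/mem_gen/rot_legal.
(* [tij] links cells [i] and [j], numbered 0..8 row by row; [4] is the centre. *)
have t01 : tperm [cell 0, 0] [cell 0, 1] \in G3.
  by rewrite grid3_swap_word (groupM (groupM (groupM (groupM (groupVr B) (groupVr C)) B) A) C).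
have t14 : tperm [cell 0, 1] [cell 1, 1] \in G3.
  by apply: (tperm_conj_in A _ _ t01); eval_cells.
have t04 : tperm [cell 0, 0] [cell 1, 1] \in G3 by apply: tperm_trans_in t01 t14.
have t34 : tperm [cell 1, 0] [cell 1, 1] \in G3.
  by rewrite tpermC; apply: (tperm_conj_in A _ _ t14); eval_cells.
have t21 : tperm [cell 0, 2] [cell 0, 1] \in G3.
  by apply: (tperm_conj_in B _ _ t14); eval_cells.
have t24 : tperm [cell 0, 2] [cell 1, 1] \in G3 by apply: tperm_trans_in t21 t14.
have t52 : tperm [cell 1, 2] [cell 0, 2] \in G3.
  by apply: (tperm_conj_in B _ _ t21); eval_cells.
have t54 : tperm [cell 1, 2] [cell 1, 1] \in G3 by apply: tperm_trans_in t52 t24.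
have t74 : tperm [cell 2, 1] [cell 1, 1] \in G3.
  by rewrite tpermC; apply: (tperm_conj_in C _ _ t34); eval_cells.
have t67 : tperm [cell 2, 0] [cell 2, 1] \in G3.
  by apply: (tperm_conj_in C _ _ t74); eval_cells.
have t64 : tperm [cell 2, 0] [cell 1, 1] \in G3 by apply: tperm_trans_in t67 t74.
have t85 : tperm [cell 2, 2] [cell 1, 2] \in G3.
  by apply: (tperm_conj_in D _ _ t54); eval_cells.
have t84 : tperm [cell 2, 2] [cell 1, 1] \in G3 by apply: tperm_trans_in t85 t54.
apply: (perm_in_of_tperm_star (x := [cell 1, 1])) => -[[[|[|[|//]]] hi] [[|[|[|//]]] hj]].
all: rewrite (bool_irrelevance hi isT) (bool_irrelevance hj isT) tpermC //.
by rewrite tperm1 group1.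
Qed.

End Grid3.

Local Close Scope group_scope.

Section Grid.
Variable m : nat.
Local Notation n := m.+3.
Local Notation G := <<legal_moves (@grid_edge n)>>%g.

Definition block (r0 c0 : nat) (a : cell 3) : cell n :=
  (inord (r0 + a.1), inord (c0 + a.2)).

Section Block.
Variables r0 c0 : nat.
Hypotheses (hr : r0 <= m) (hc : c0 <= m).

Lemma block_inj : injective (block r0 c0).
Proof.
move=> [a1 a2] [b1 b2] [/(congr1 val) e1 /(congr1 val) e2].
have la1 := ltn_ord a1; have la2 := ltn_ord a2.
have lb1 := ltn_ord b1; have lb2 := ltn_ord b2.
move: e1 e2; rewrite /= !inordK; try lia.
by move=> e1 e2; congr pair; apply/val_inj => /=; lia.
Qed.

Lemma block_edge : {homo block r0 c0 : a b / grid_edge a b >-> grid_edge a b}.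
Proof.
move=> [a1 a2] [b1 b2]; have la1 := ltn_ord a1; have la2 := ltn_ord a2.
have lb1 := ltn_ord b1; have lb2 := ltn_ord b2.
by rewrite /grid_edge /block /= !inordK; lia.
Qed.

Lemma block_onto (w : cell n) : r0 <= w.1 <= r0 + 2 -> c0 <= w.2 <= c0 + 2 ->
  exists a, w = block r0 c0 a.
Proof.
case: w => w1 w2 /= /andP[w1r w1R] /andP[w2c w2C].
have a1 : w1 - r0 < 3 by lia.
have a2 : w2 - c0 < 3 by lia.
exists (Ordinal a1, Ordinal a2).
by congr pair; apply/val_inj; rewrite /= inordK; lia.
Qed.

End Block.

Lemma tperm_near_in (u v : cell n) :
  u.1 <= v.1 + 2 -> v.1 <= u.1 + 2 -> u.2 <= v.2 + 2 -> v.2 <= u.2 + 2 ->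
  tperm u v \in G.
Proof.
move=> *; set r0 := minn (minn u.1 v.1) m; set c0 := minn (minn u.2 v.2) m.
have hr : r0 <= m by apply: geq_minr.
have hc : c0 <= m by apply: geq_minr.
have ltu1 := ltn_ord u.1; have ltu2 := ltn_ord u.2.
have ltv1 := ltn_ord v.1; have ltv2 := ltn_ord v.2.
have [a ->] : exists a, u = block r0 c0 a by apply: block_onto; lia.
have [b ->] : exists b, v = block r0 c0 b by apply: block_onto; lia.
rewrite -(perm_ext_tperm (block_inj hr hc)).
exact/(perm_ext_gen (block_inj hr hc) (block_edge hr hc))/grid3_legal_gen.
Qed.

Lemma grid_legal_gen (s : {perm cell n}) : s \in G.
Proof.
apply: (perm_in_of_tperm_star (x := (ord0, ord0))) => -[u1 u2].
have [k] := ubnP (u1 + u2); elim: k u1 u2 => [//|k IHk] u1 u2 hu.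
have lt1 := ltn_ord u1; have lt2 := ltn_ord u2.
have [u0|u_pos] := eqVneq (u1 + u2) 0.
  by apply: tperm_near_in => /=; lia.
have [lt1' lt2'] : u1 - 1 < n /\ u2 - 1 < n by lia.
apply: (@tperm_trans_in _ _ _ (inord (u1 - 1), inord (u2 - 1))).
  by apply: IHk; rewrite !inordK; lia.
by apply: tperm_near_in; rewrite /= !inordK; lia.
Qed.

End Grid.

Theorem corollary1 (n : nat) (hn : 3 <= n) (R : finType)
  (hR : #|R| = n ^ 2)
  (xI xG : R -> cell n) (bI : bijective xI) (bG : bijective xG) :
  exists p : R -> nat -> cell n,
    (forall r, feasible (@grid_edge n) (xI r) (xG r) (p r)) /\
    (forall ri rj, ri <> rj -> ~ collide (p ri) (p rj)).
Proof.
have [m def_n] : exists m, n = m.+3 by exists (n - 3); lia.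
subst n.
have [xI' xIK xI'K] := bI.
have pi_inj : injective (xG \o xI') by apply: inj_comp (bij_inj bG) (can_inj xI'K).
have [p [p_feasible p_free]] := legal_schedule (bij_inj bI) (grid_legal_gen (perm pi_inj)).
by exists p; split=> // r; have := p_feasible r; rewrite permE /= xIK.
Qed.
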